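(* There exists a semifilter $\mathcal{S}$ that is homeomorphic to $\mathbf{S}$, where $\mathbf{S}$ is the (unique up to homeomorphism) zero-dimensional space that is the union of a completely metrizable subspace and a $\sigma$-compact subspace, is nowhere $\sigma$-compact, and is nowhere the union of a completely metrizable subspace and a countable subspace.
   Context: All spaces are separable metrizable. For a topological property $\mathcal{P}$, a space $X$ is nowhere $\mathcal{P}$ if $X$ is non-empty and no non-empty open subspace of $X$ has $\mathcal{P}$. It is known (van Mill) that a zero-dimensional space with the three listed properties is unique up to homeomorphism; this space is denoted $\mathbf{S}$. A semifilter (on $\omega$) is a collection $\mathcal{S}\subseteq\mathcal{P}(\omega)$ such that $\varnothing\notin\mathcal{S}$, $\omega\in\mathcal{S}$, $\mathcal{S}$ is closed under finite modifications, and $\mathcal{S}$ is upward-closed; it is viewed as a subspace of $2^\omega$ via characteristic functions. *)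

From Stdlib Require Import Reals List.
Open Scope R_scope.

(** Points of the Cantor space 2^omega (= characteristic functions of subsets of omega). *)
Definition Cantor := nat -> bool.

Definition cset := Cantor -> Prop.

Definition agree (n : nat) (x y : Cantor) : Prop := forall k, (k < n)%nat -> x k = y k.

Definition open (U : cset) : Prop :=
  forall x, U x -> exists n, forall y, agree n x y -> U y.

Definition rel_open (X U : cset) : Prop :=
  (forall x, U x -> X x) /\
  (forall x, U x -> exists n, forall y, X y -> agree n x y -> U y).

Definition rel_clopen (X U : cset) : Prop :=
  rel_open X U /\ rel_open X (fun x => X x /\ ~ U x).

Definition zero_dimensional (X : cset) : Prop :=
  forall x U, rel_open X U -> U x ->
    exists V, rel_clopen X V /\ V x /\ (forall y, V y -> U y).

Definition compact (K : cset) : Prop :=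
  forall (I : Type) (F : I -> cset),
    (forall i, open (F i)) ->
    (forall x, K x -> exists i, F i x) ->
    exists l : list I, forall x, K x -> exists i, In i l /\ F i x.

Definition sigma_compact (X : cset) : Prop :=
  exists K : nat -> cset, (forall n, compact (K n)) /\
    (forall x, X x <-> exists n, K n x).

(** Countable (possibly finite or empty). *)
Definition countable (X : cset) : Prop :=
  exists f : nat -> Cantor, forall x, X x -> exists n, f n = x.

Definition completely_metrizable (X : cset) : Prop :=
  exists d : Cantor -> Cantor -> R,
    (forall x y, X x -> X y -> 0 <= d x y) /\
    (forall x y, X x -> X y -> (d x y = 0 <-> x = y)) /\
    (forall x y, X x -> X y -> d x y = d y x) /\
    (forall x y z, X x -> X y -> X z -> d x z <= d x y + d y z) /\
    (forall U, (forall x, U x -> X x) ->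
       (rel_open X U <->
        forall x, U x -> exists eps, 0 < eps /\
          forall y, X y -> d x y < eps -> U y)) /\
    (forall s : nat -> Cantor, (forall n, X (s n)) ->
       (forall eps, 0 < eps -> exists N, forall m n, (N <= m)%nat -> (N <= n)%nat ->
          d (s m) (s n) < eps) ->
       exists x, X x /\ forall eps, 0 < eps -> exists N, forall n, (N <= n)%nat ->
          d (s n) x < eps).

Definition union_of (P Q : cset -> Prop) (X : cset) : Prop :=
  exists A B, P A /\ Q B /\ (forall x, X x <-> A x \/ B x).

Definition nowhere (P : cset -> Prop) (X : cset) : Prop :=
  (exists x, X x) /\
  forall U, rel_open X U -> (exists x, U x) -> ~ P U.

(** The defining properties of van Mill's space S (unique up to homeomorphism
    among separable metrizable spaces; every subspace of 2^omega is separable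
    metrizable). *)
Definition is_S (X : cset) : Prop :=
  zero_dimensional X /\
  union_of completely_metrizable sigma_compact X /\
  nowhere sigma_compact X /\
  nowhere (union_of completely_metrizable countable) X.

(** Semifilters on omega, viewed as subspaces of 2^omega. *)
Definition semifilter (S : cset) : Prop :=
  ~ S (fun _ => false) /\
  S (fun _ => true) /\
  (forall x y, S x -> (exists N, forall n, (N <= n)%nat -> x n = y n) -> S y) /\
  (forall x y, S x -> (forall n, x n = true -> y n = true) -> S y).

(* The model is the set of x that have infinitely many ones on 3N or are eventually 1 on 3N+1: a
   semifilter, and the union of a G_delta set (completely metrizable by a metric that counts the
   ones on 3N seen before two points split) and an F_sigma set of closed, hence compact, pieces.
   Both "nowhere" properties come from one fusion construction inside a basic open set of the
   model: starting from a point, each stage resets one far-away bit of a fixed residue class, and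
   the stages converge to a limit. Complements of compact sets are open, so if every stage avoids
   a sigma-compact set, so does the limit; by completeness, if every stage lies in a completely
   metrizable set, so does the limit. Resetting bits on 3N of a point that is eventually 0 gives
   stages outside the model with limit inside it; resetting bits on 3N+1 of a point that is
   eventually 1 there, and that differs from the m-th point of a given countable set on 3N+2,
   gives stages in the model minus the countable set with limit outside the model. *)

From Pilot Require Import Defs.
From Stdlib Require Import Reals List.
From Stdlib Require Import Lra Lia Arith.
From Stdlib Require Import Classical ClassicalEpsilon ConstructiveEpsilon FunctionalExtensionality.
Open Scope nat_scope.
Open Scope bool_scope.

Lemma agree_refl n x : agree n x x.
Proof. intros k _; reflexivity. Qed.

Lemma agree_sym n x y : agree n x y -> agree n y x.
Proof. intros H k Hk; symmetry; auto. Qed.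

Lemma agree_trans n x y z : agree n x y -> agree n y z -> agree n x z.
Proof. intros H1 H2 k Hk; rewrite H1, H2; auto. Qed.

Lemma agree_le m n x y : m <= n -> agree n x y -> agree m x y.
Proof. intros Hm H k Hk; apply H; lia. Qed.

Definition converges (s : nat -> Cantor) (x : Cantor) : Prop :=
  forall L, exists N, forall n, N <= n -> agree L (s n) x.

Lemma converges_unique s x y : converges s x -> converges s y -> x = y.
Proof.
  intros Hx Hy. apply functional_extensionality. intros k.
  destruct (Hx (S k)) as [Nx HNx], (Hy (S k)) as [Ny HNy].
  rewrite <- (HNx (max Nx Ny) ltac:(lia) k ltac:(lia)).
  apply (HNy (max Nx Ny)); lia.
Qed.

Lemma agree_cauchy_converges (s : nat -> Cantor) :
  (forall j, exists N, forall p q, N <= p -> N <= q -> agree j (s p) (s q)) ->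
  exists x, converges s x.
Proof.
  intros Hs. destruct (choice _ Hs) as [f Hf].
  exists (fun k => s (f (S k)) k). intros L. exists (f L). intros n Hn k Hk.
  set (M := max (f L) (f (S k))).
  transitivity (s M k); [apply (Hf L); lia |].
  apply (Hf (S k)); lia.
Qed.

Lemma div_mod3 a r : r < 3 -> (3 * a + r) / 3 = a /\ (3 * a + r) mod 3 = r.
Proof.
  intros Hr. apply (Nat.div_mod_unique 3); [apply Nat.mod_upper_bound; lia | exact Hr |].
  rewrite <- Nat.div_mod_eq. reflexivity.
Qed.

Lemma zero_dimensional_subspace (X : cset) : zero_dimensional X.
Proof.
  intros x U [HUX HU] Ux. destruct (HU x Ux) as [n Hn].
  exists (fun y => X y /\ agree n x y). split; [split; split | split].
  - intros y [Xy _]; exact Xy.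
  - intros y [_ Hy]. exists n. intros z Xz Hz. split; [exact Xz | eapply agree_trans; eauto].
  - intros y [Xy _]; exact Xy.
  - intros y [Xy Hy]. exists n. intros z Xz Hz. split; [exact Xz |].
    intros [_ Hz']. apply Hy. split; [exact Xy |].
    eapply agree_trans; [exact Hz' | apply agree_sym; exact Hz].
  - split; [apply HUX; exact Ux | apply agree_refl].
  - intros y [Xy Hy]. apply Hn; auto.
Qed.

(** * Compact subsets of the Cantor space *)

Definition set_bit (p : Cantor) (m : nat) (b : bool) : Cantor :=
  fun k => if k =? m then b else p k.

Lemma agree_set_bit p m b : agree m p (set_bit p m b).
Proof. intros k Hk. unfold set_bit. destruct (Nat.eqb_spec k m); [lia | reflexivity]. Qed.

Lemma agree_set_bit_S p m y : agree m p y -> agree (S m) (set_bit p m (y m)) y.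
Proof.
  intros H k Hk. unfold set_bit. destruct (Nat.eqb_spec k m) as [-> | Hkm]; [reflexivity |].
  apply H; lia.
Qed.

Section Konig.
Variable bad : nat -> Cantor -> Prop.
Hypothesis bad_split : forall m p,
  bad m p -> bad (S m) (set_bit p m false) \/ bad (S m) (set_bit p m true).

Fixpoint branch (m : nat) : Cantor :=
  match m with
  | 0 => fun _ => false
  | S m => if excluded_middle_informative (bad (S m) (set_bit (branch m) m false))
           then set_bit (branch m) m false else set_bit (branch m) m true
  end.

Lemma branch_bad : bad 0 (branch 0) -> forall m, bad m (branch m).
Proof.
  intros H0 m. induction m as [|m IH]; [exact H0 |]. simpl.
  destruct excluded_middle_informative as [Hf | Hf]; [exact Hf |].
  destruct (bad_split _ _ IH); tauto.
Qed.

Lemma branch_stable m m' : m <= m' -> agree m (branch m) (branch m').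
Proof.
  intros Hm. induction Hm as [|m' Hm IH]; [apply agree_refl |].
  eapply agree_trans; [exact IH |]. apply (agree_le m m'); [exact Hm |]. simpl.
  destruct excluded_middle_informative; apply agree_set_bit.
Qed.

Definition branch_limit : Cantor := fun k => branch (S k) k.

Lemma agree_branch_limit m : agree m (branch m) branch_limit.
Proof.
  intros k Hk. unfold branch_limit.
  symmetry. apply (branch_stable (S k) m); lia.
Qed.

End Konig.

Lemma compact_of_open_compl (K : cset) : open (fun x => ~ K x) -> Defs.compact K.
Proof.
  intros HK I F Fo Fc. apply NNPP; intros Hno.
  set (bad := fun m p => ~ exists l : list I,
    forall y, K y -> agree m p y -> exists i, In i l /\ F i y).
  assert (bad_split : forall m p,
    bad m p -> bad (S m) (set_bit p m false) \/ bad (S m) (set_bit p m true)).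
  { intros m p Hbad. apply NNPP; intros Hgood. apply Hbad.
    apply not_or_and in Hgood as [H0 H1]. apply NNPP in H0 as [l0 H0]. apply NNPP in H1 as [l1 H1].
    exists (l0 ++ l1). intros y Ky Hy. pose proof (agree_set_bit_S p m y Hy) as Hy'.
    destruct (y m); [destruct (H1 y Ky Hy') as [i [Hi Fi]] | destruct (H0 y Ky Hy') as [i [Hi Fi]]];
      exists i; split; auto; apply in_or_app; auto. }
  assert (Hbranch : forall m, bad m (branch bad m)).
  { apply branch_bad; [exact bad_split |]. intros [l Hl]. apply Hno. exists l.
    intros y Ky. apply Hl; [exact Ky | intros k Hk; lia]. }
  set (x := branch_limit bad).
  assert (Kx : K x).
  { apply NNPP; intros nKx. destruct (HK x nKx) as [L HL]. apply (Hbranch L). exists nil.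
    intros y Ky Hy. exfalso. apply (HL y); [| exact Ky].
    eapply agree_trans; [apply agree_sym, agree_branch_limit | exact Hy]. }
  destruct (Fc x Kx) as [i Fi]. destruct (Fo i x Fi) as [n Hn].
  apply (Hbranch n). exists (i :: nil). intros y Ky Hy. exists i. split; [left; reflexivity |].
  apply Hn. eapply agree_trans; [apply agree_sym, agree_branch_limit | exact Hy].
Qed.

Lemma open_compl_of_compact (K : cset) : Defs.compact K -> open (fun x => ~ K x).
Proof.
  intros HK z nKz.
  destruct (HK nat (fun L w => ~ agree L z w)) as [l Hl].
  - intros L w Hw. exists L. intros y Hy Hzy. apply Hw.
    eapply agree_trans; [exact Hzy | apply agree_sym; exact Hy].
  - intros w Kw. apply NNPP; intros Hall. apply nKz.
    replace z with w; [exact Kw |]. apply functional_extensionality. intros k.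
    apply NNPP; intros Hk. apply Hall. exists (S k). intros Hag. apply Hk. symmetry; apply Hag; lia.
  - exists (list_max l). intros w Hw Kw. destruct (Hl w Kw) as [i [Hi Hni]]. apply Hni.
    apply (agree_le i (list_max l)); [| exact Hw].
    pose proof (proj1 (list_max_le l (list_max l)) (Nat.le_refl _)) as Hmax.
    rewrite Forall_forall in Hmax. exact (Hmax i Hi).
Qed.

Lemma sigma_compact_fusion (X : cset) : sigma_compact X ->
  exists req : nat -> Cantor -> nat, forall (z : nat -> Cantor) (y : Cantor),
    (forall j, ~ X (z j)) -> (forall j, agree (req j (z j)) (z j) y) -> ~ X y.
Proof.
  intros [K [HK HX]].
  assert (Hreq : forall p : nat * Cantor, exists L,
    ~ X (snd p) -> forall w, agree L (snd p) w -> ~ K (fst p) w).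
  { intros [j w]. destruct (classic (X w)) as [Xw | nXw]; [exists 0; tauto |].
    assert (nKw : ~ K j w) by (intros Kw; apply nXw, HX; eauto).
    destruct (open_compl_of_compact _ (HK j) w nKw) as [L HL]. exists L; auto. }
  destruct (choice _ Hreq) as [g Hg]. exists (fun j w => g (j, w)).
  intros z y Hz Hy Xy. apply HX in Xy as [j Kj].
  exact (Hg (j, z j) (Hz j) y (Hy j) Kj).
Qed.

(** * Ones on a set of positions *)

Definition infinitely_often (P : nat -> Prop) : Prop := forall N, exists k, N <= k /\ P k.
Definition eventually (P : nat -> Prop) : Prop := exists N, forall k, N <= k -> P k.

Definition inf_on (m : nat -> bool) (x : Cantor) : Prop :=
  infinitely_often (fun k => m k && x k = true).
Definition cof_on (m : nat -> bool) (x : Cantor) : Prop :=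
  eventually (fun k => m k = true -> x k = true).

Definition eventually_eq (x y : Cantor) : Prop := eventually (fun k => x k = y k).

Lemma eventually_eq_sym x y : eventually_eq x y -> eventually_eq y x.
Proof. intros [N HN]. exists N. intros k Hk. symmetry. apply HN, Hk. Qed.

Lemma inf_on_eventually_eq m x y : eventually_eq x y -> inf_on m x -> inf_on m y.
Proof.
  intros [N HN] Hx M. destruct (Hx (max M N)) as [k [Hk Hmk]].
  exists k. split; [lia |]. rewrite <- HN by lia. exact Hmk.
Qed.

Lemma cof_on_eventually_eq m x y : eventually_eq x y -> cof_on m x -> cof_on m y.
Proof.
  intros [N HN] [M HM]. exists (max M N). intros k Hk Hmk.
  rewrite <- HN by lia. apply HM; [lia | exact Hmk].
Qed.

Lemma inf_on_mono m x y : (forall k, x k = true -> y k = true) -> inf_on m x -> inf_on m y.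
Proof.
  intros Hxy Hx N. destruct (Hx N) as [k [Hk Hmk]]. exists k. split; [exact Hk |].
  apply Bool.andb_true_iff in Hmk as [Hm Hxk]. rewrite Hm. apply Hxy, Hxk.
Qed.

Lemma cof_on_mono m x y : (forall k, x k = true -> y k = true) -> cof_on m x -> cof_on m y.
Proof. intros Hxy [N HN]. exists N. auto. Qed.

Lemma cof_on_sigma_compact m : sigma_compact (cof_on m).
Proof.
  exists (fun N x => forall k, N <= k -> m k = true -> x k = true). split.
  - intros N. apply compact_of_open_compl. intros x Hx.
    assert (exists k, N <= k /\ m k = true /\ x k = false) as [k [Hk [Hmk Hxk]]].
    { apply NNPP; intros Hno. apply Hx. intros k Hk Hmk.
      destruct (x k) eqn:E; [reflexivity | exfalso; eauto]. }
    exists (S k). intros y Hy Hy'. specialize (Hy' k Hk Hmk).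
    rewrite <- Hy in Hy' by lia. congruence.
  - intros x. split; intros [N HN]; exists N; exact HN.
Qed.

(** * A complete metric on [inf_on m] *)

Section CountingMetric.
Variable m : nat -> bool.

Fixpoint hits (x : Cantor) (n : nat) : nat :=
  match n with
  | 0 => 0
  | S n => hits x n + (if m n && x n then 1 else 0)
  end.

Lemma hits_mono x a b : a <= b -> hits x a <= hits x b.
Proof. intros Hab. induction Hab as [|b Hab IH]; simpl; lia. Qed.

Lemma hits_le x n : hits x n <= n.
Proof. induction n as [|n IH]; simpl; [lia | destruct (m n && x n); lia]. Qed.

Lemma hits_agree x y n : agree n x y -> hits x n = hits y n.
Proof.
  induction n as [|n IH]; intros H; [reflexivity |]. simpl.
  rewrite IH by (apply (agree_le n (S n)); auto). rewrite (H n) by lia. reflexivity.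
Qed.

Lemma hits_increase x a b : hits x a < hits x b -> exists k, a <= k < b /\ m k && x k = true.
Proof.
  induction b as [|b IH]; intros H; [simpl in H; lia |].
  destruct (le_lt_dec a b) as [Hab | Hba].
  - revert H. simpl. destruct (m b && x b) eqn:E; intros H.
    + exists b. split; [lia | exact E].
    + destruct IH as [k [Hk Hmk]]; [lia |]. exists k. split; [lia | exact Hmk].
  - pose proof (hits_mono x (S b) a Hba). lia.
Qed.

Lemma inf_on_hits x : inf_on m x <-> forall J, exists L, J <= hits x L.
Proof.
  split.
  - intros Hx J. induction J as [|J [L HL]]; [exists 0; lia |].
    destruct (Hx L) as [k [Hk Hmk]]. exists (S k). simpl. rewrite Hmk.
    pose proof (hits_mono x L k Hk). lia.
  - intros Hx N. destruct (Hx (S (hits x N))) as [L HL].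
    destruct (hits_increase x N L) as [k [Hk Hmk]]; [lia |]. exists k. split; [lia | exact Hmk].
Qed.

Definition first_diff (x y : Cantor) : nat :=
  match excluded_middle_informative (exists k, x k <> y k) with
  | left H => proj1_sig (epsilon_smallest _ (fun k => excluded_middle_informative _) H)
  | right _ => 0
  end.

Lemma first_diff_spec x y :
  x <> y -> x (first_diff x y) <> y (first_diff x y) /\ agree (first_diff x y) x y.
Proof.
  intros Hxy. unfold first_diff. destruct excluded_middle_informative as [H | H].
  - destruct epsilon_smallest as [d [Hd Hmin]]; simpl. split; [exact Hd |].
    intros k Hk. apply NNPP; intros Hk'. specialize (Hmin k Hk'). lia.
  - exfalso. apply Hxy, functional_extensionality. intros k.
    apply NNPP; intros Hk. apply H; eauto.
Qed.

Lemma first_diff_ge x y n : x <> y -> agree n x y -> n <= first_diff x y.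
Proof.
  intros Hxy Hn. destruct (first_diff_spec x y Hxy) as [Hd _].
  destruct (le_lt_dec n (first_diff x y)) as [Hle | Hlt]; [exact Hle |].
  exfalso. apply Hd, Hn, Hlt.
Qed.

Local Open Scope R_scope.

Lemma Rinv_succ_pos n : 0 < / INR (S n).
Proof. apply Rinv_0_lt_compat, lt_0_INR; lia. Qed.

Lemma Rinv_succ_le p q : (p <= q)%nat -> / INR (S q) <= / INR (S p).
Proof. intros H. apply Rinv_le_contravar; [apply lt_0_INR; lia | apply le_INR; lia]. Qed.

Lemma Rinv_succ_lt p q : / INR (S q) < / INR (S p) -> (p < q)%nat.
Proof.
  intros H. destruct (le_lt_dec q p) as [Hqp | Hpq]; [| exact Hpq].
  pose proof (Rinv_succ_le q p Hqp). lra.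
Qed.

Lemma Rinv_succ_small eps : 0 < eps -> exists j, / INR (S j) < eps.
Proof.
  intros H. destruct (archimed_cor1 eps H) as [N [HN HN0]]. exists (pred N).
  replace (S (pred N)) with N by lia. exact HN.
Qed.

(* Two points are close when they agree on an initial segment containing many marked ones of
   the first one; this makes [inf_on m] complete although it is not closed. *)
Definition hits_dist (x y : Cantor) : R :=
  if excluded_middle_informative (x = y) then 0 else / INR (S (hits x (first_diff x y))).

Lemma hits_dist_neq x y : x <> y -> hits_dist x y = / INR (S (hits x (first_diff x y))).
Proof.
  intros H. unfold hits_dist. destruct excluded_middle_informative; [contradiction | reflexivity].
Qed.

Lemma hits_dist_nonneg x y : 0 <= hits_dist x y.
Proof.
  unfold hits_dist. destruct excluded_middle_informative; [lra |]. left; apply Rinv_succ_pos.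
Qed.

Lemma hits_dist_le_agree x y n : agree n x y -> hits_dist x y <= / INR (S (hits x n)).
Proof.
  intros Hn. destruct (classic (x = y)) as [-> | Hxy].
  - unfold hits_dist. destruct excluded_middle_informative; [| contradiction].
    left; apply Rinv_succ_pos.
  - rewrite (hits_dist_neq x y Hxy). apply Rinv_succ_le, hits_mono, first_diff_ge; assumption.
Qed.

Lemma agree_of_hits_dist_lt x y n : hits_dist x y < / INR (S (hits x n)) -> agree n x y.
Proof.
  intros H. destruct (classic (x = y)) as [-> | Hxy]; [apply agree_refl |].
  rewrite hits_dist_neq in H by exact Hxy. apply Rinv_succ_lt in H.
  destruct (first_diff_spec x y Hxy) as [_ Hd]. apply (agree_le n (first_diff x y)); [| exact Hd].
  destruct (le_lt_dec n (first_diff x y)) as [Hle | Hlt]; [exact Hle |].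
  pose proof (hits_mono x (first_diff x y) n). lia.
Qed.

Lemma agree_of_hits_dist_lt_succ x y j : hits_dist x y < / INR (S j) -> agree j x y.
Proof.
  intros H. apply agree_of_hits_dist_lt.
  pose proof (Rinv_succ_le (hits x j) j (hits_le x j)). lra.
Qed.

Lemma hits_dist_zero x y : hits_dist x y = 0 <-> x = y.
Proof.
  unfold hits_dist. destruct excluded_middle_informative as [Hxy | Hxy]; [tauto |].
  pose proof (Rinv_succ_pos (hits x (first_diff x y))). split; [lra | contradiction].
Qed.

Lemma hits_dist_le_sym x y : hits_dist y x <= hits_dist x y.
Proof.
  destruct (classic (x = y)) as [-> | Hxy]; [lra |].
  destruct (first_diff_spec x y Hxy) as [_ Hd].
  rewrite (hits_dist_neq x y Hxy), (hits_agree x y _ Hd).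
  apply hits_dist_le_agree, agree_sym, Hd.
Qed.

Lemma hits_dist_sym x y : hits_dist x y = hits_dist y x.
Proof. pose proof (hits_dist_le_sym x y). pose proof (hits_dist_le_sym y x). lra. Qed.

Lemma hits_dist_ultra x y z : hits_dist x z <= Rmax (hits_dist x y) (hits_dist y z).
Proof.
  destruct (classic (x = y)) as [-> | Hxy]; [apply Rmax_r |].
  destruct (classic (y = z)) as [-> | Hyz]; [apply Rmax_l |].
  destruct (first_diff_spec x y Hxy) as [_ Hxy'], (first_diff_spec y z Hyz) as [_ Hyz'].
  destruct (le_lt_dec (first_diff x y) (first_diff y z)) as [Hle | Hlt].
  - eapply Rle_trans; [| apply Rmax_l]. rewrite (hits_dist_neq x y Hxy).
    apply hits_dist_le_agree. eapply agree_trans; [exact Hxy' | exact (agree_le _ _ _ _ Hle Hyz')].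
  - eapply Rle_trans; [| apply Rmax_r]. rewrite (hits_dist_neq y z Hyz).
    assert (Hxy'' : agree (first_diff y z) x y)
      by exact (agree_le _ _ _ _ (Nat.lt_le_incl _ _ Hlt) Hxy').
    rewrite <- (hits_agree x y _ Hxy''). apply hits_dist_le_agree.
    eapply agree_trans; [exact Hxy'' | exact Hyz'].
Qed.

Lemma hits_dist_triangle x y z : hits_dist x z <= hits_dist x y + hits_dist y z.
Proof.
  pose proof (hits_dist_ultra x y z) as H.
  pose proof (hits_dist_nonneg x y). pose proof (hits_dist_nonneg y z).
  unfold Rmax in H. destruct Rle_dec; lra.
Qed.

Lemma hits_dist_topology U : (forall x, U x -> inf_on m x) ->
  (rel_open (inf_on m) U <->
   forall x, U x -> exists eps, 0 < eps /\ forall y, inf_on m y -> hits_dist x y < eps -> U y).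
Proof.
  intros HU. split.
  - intros [_ Hopen] x Ux. destruct (Hopen x Ux) as [n Hn].
    exists (/ INR (S (hits x n))). split; [apply Rinv_succ_pos |].
    intros y Hy Hxy. apply Hn; [exact Hy |]. apply agree_of_hits_dist_lt, Hxy.
  - intros Hball. split; [exact HU |]. intros x Ux.
    destruct (Hball x Ux) as [eps [Heps Hb]]. destruct (Rinv_succ_small eps Heps) as [j Hj].
    destruct (proj1 (inf_on_hits x) (HU x Ux) j) as [L HL]. exists L.
    intros y Hy Hxy. apply Hb; [exact Hy |].
    pose proof (hits_dist_le_agree x y L Hxy). pose proof (Rinv_succ_le j (hits x L) HL). lra.
Qed.

Lemma hits_dist_lt_agree_hits x y J L : hits_dist x y < / INR (S J) -> (J <= hits x L)%nat ->
  exists n, (n <= L)%nat /\ (J <= hits x n)%nat /\ agree n x y.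
Proof.
  intros Hxy HL. destruct (classic (x = y)) as [-> | Hne].
  { exists L. split; [lia | split; [exact HL | apply agree_refl]]. }
  rewrite hits_dist_neq in Hxy by exact Hne. apply Rinv_succ_lt in Hxy.
  destruct (first_diff_spec x y Hne) as [_ Hd]. exists (min (first_diff x y) L).
  split; [lia |]. split; [destruct (Nat.min_spec (first_diff x y) L) as [[_ ->] | [_ ->]]; lia |].
  apply (agree_le _ _ _ _ (Nat.le_min_l _ _) Hd).
Qed.

Lemma hits_dist_complete (s : nat -> Cantor) : (forall n, inf_on m (s n)) ->
  (forall eps, 0 < eps -> exists N, forall p q, (N <= p)%nat -> (N <= q)%nat ->
     hits_dist (s p) (s q) < eps) ->
  exists x, inf_on m x /\
    forall eps, 0 < eps -> exists N, forall n, (N <= n)%nat -> hits_dist (s n) x < eps.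
Proof.
  intros Hs Hcauchy.
  destruct (agree_cauchy_converges s) as [x Hx].
  { intros j. destruct (Hcauchy _ (Rinv_succ_pos j)) as [N HN]. exists N.
    intros p q Hp Hq. apply agree_of_hits_dist_lt_succ, HN; assumption. }
  assert (Hinf : inf_on m x).
  { apply inf_on_hits. intros J. destruct (Hcauchy _ (Rinv_succ_pos J)) as [P HP].
    destruct (proj1 (inf_on_hits (s P)) (Hs P) J) as [L HL]. destruct (Hx L) as [M HM].
    destruct (hits_dist_lt_agree_hits (s P) (s (max P M)) J L) as [n [HnL [Hn Hagree]]];
      [apply HP; lia | exact HL |].
    exists n. rewrite <- (hits_agree (s P) x n); [exact Hn |].
    eapply agree_trans; [exact Hagree | apply (agree_le n L _ _ HnL), HM; lia]. }
  exists x. split; [exact Hinf |]. intros eps Heps.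
  destruct (Rinv_succ_small eps Heps) as [j Hj]. destruct (proj1 (inf_on_hits x) Hinf j) as [L HL].
  destruct (Hx L) as [N HN]. exists N. intros n Hn.
  pose proof (hits_dist_le_agree (s n) x L (HN n Hn)).
  rewrite (hits_agree (s n) x L (HN n Hn)) in H. pose proof (Rinv_succ_le j (hits x L) HL). lra.
Qed.

End CountingMetric.

Lemma inf_on_completely_metrizable m : completely_metrizable (inf_on m).
Proof.
  exists (hits_dist m). split; [| split; [| split; [| split; [| split]]]].
  - intros x y _ _. apply hits_dist_nonneg.
  - intros x y _ _. apply hits_dist_zero.
  - intros x y _ _. apply hits_dist_sym.
  - intros x y z _ _ _. apply hits_dist_triangle.
  - apply hits_dist_topology.
  - apply hits_dist_complete.
Qed.

(** * Fusion limits *)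

Section CompleteMetric.
Local Open Scope R_scope.
Variables (X : cset) (d : Cantor -> Cantor -> R).
Hypothesis d_zero : forall x y, X x -> X y -> (d x y = 0 <-> x = y).
Hypothesis d_sym : forall x y, X x -> X y -> d x y = d y x.
Hypothesis d_triangle : forall x y z, X x -> X y -> X z -> d x z <= d x y + d y z.
Hypothesis d_topology : forall U, (forall x, U x -> X x) ->
  (rel_open X U <-> forall x, U x -> exists eps, 0 < eps /\ forall y, X y -> d x y < eps -> U y).
Hypothesis d_complete : forall s : nat -> Cantor, (forall n, X (s n)) ->
  (forall eps, 0 < eps -> exists N, forall p q, (N <= p)%nat -> (N <= q)%nat ->
     d (s p) (s q) < eps) ->
  exists x, X x /\ forall eps, 0 < eps -> exists N, forall n, (N <= n)%nat -> d (s n) x < eps.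

Lemma ball_contains_cylinder z eps : X z -> 0 < eps ->
  exists L, forall y, X y -> agree L z y -> d z y < eps.
Proof.
  intros Xz Heps.
  assert (Hball : rel_open X (fun y => X y /\ d z y < eps)).
  { apply d_topology; [intros y [Xy _]; exact Xy |].
    intros y [Xy Hy]. exists (eps - d z y). split; [lra |].
    intros w Xw Hw. split; [exact Xw |]. pose proof (d_triangle z y w Xz Xy Xw). lra. }
  destruct Hball as [_ Hball]. destruct (Hball z) as [L HL].
  { split; [exact Xz |]. rewrite (proj2 (d_zero z z Xz Xz) eq_refl). exact Heps. }
  exists L. intros y Xy Hy. apply (HL y Xy Hy).
Qed.

Lemma metric_limit_converges (s : nat -> Cantor) x : (forall n, X (s n)) -> X x ->
  (forall eps, 0 < eps -> exists N, forall n, (N <= n)%nat -> d (s n) x < eps) -> converges s x.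
Proof.
  intros Xs Xx Hlim L.
  assert (Hcyl : rel_open X (fun y => X y /\ agree L x y)).
  { split; [intros y [Xy _]; exact Xy |]. intros y [_ Hy]. exists L.
    intros w Xw Hw. split; [exact Xw | eapply agree_trans; eauto]. }
  pose proof (proj1 (d_topology _ (fun y (Hy : X y /\ agree L x y) => proj1 Hy)) Hcyl) as Hball.
  destruct (Hball x (conj Xx (agree_refl L x))) as [eps [Heps Hb]].
  destruct (Hlim eps Heps) as [N HN]. exists N. intros n Hn.
  apply agree_sym, (Hb (s n) (Xs n)). rewrite d_sym by auto. apply HN, Hn.
Qed.

Lemma halving_cauchy (s : nat -> Cantor) : (forall n, X (s n)) ->
  (forall j, d (s j) (s (S j)) < (/ 2) ^ S j) ->
  forall eps, 0 < eps -> exists N, forall p q, (N <= p)%nat -> (N <= q)%nat -> d (s p) (s q) < eps.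
Proof.
  intros Xs Hstep.
  assert (Htail : forall k j, d (s j) (s (j + k)%nat) < (/ 2) ^ j).
  { induction k as [|k IH]; intros j.
    - rewrite Nat.add_0_r, (proj2 (d_zero _ _ (Xs j) (Xs j)) eq_refl). apply pow_lt; lra.
    - replace (j + S k)%nat with (S j + k)%nat by lia.
      pose proof (d_triangle _ _ _ (Xs j) (Xs (S j)) (Xs (S j + k)%nat)).
      pose proof (Hstep j). pose proof (IH (S j)). simpl in *. lra. }
  intros eps Heps.
  destruct (pow_lt_1_zero (/ 2) ltac:(rewrite Rabs_pos_eq; lra) (eps / 2) ltac:(lra)) as [N HN].
  specialize (HN N (le_n N)). rewrite Rabs_pos_eq in HN by (apply pow_le; lra).
  exists N. intros p q Hp Hq.
  pose proof (Htail (p - N)%nat N). pose proof (Htail (q - N)%nat N).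
  replace (N + (p - N))%nat with p in * by lia. replace (N + (q - N))%nat with q in * by lia.
  pose proof (d_triangle _ _ _ (Xs p) (Xs N) (Xs q)).
  rewrite (d_sym (s p) (s N) (Xs p) (Xs N)) in *. lra.
Qed.

Lemma metric_fusion_closed : exists req : nat -> Cantor -> nat, forall (z : nat -> Cantor) y,
  (forall j, X (z j)) ->
  (forall j, agree (req j (z j)) (z j) (z (S j)) /\ agree (req j (z j)) (z j) y) -> X y.
Proof.
  assert (Hreq : forall p : nat * Cantor, exists L, X (snd p) ->
    (fst p <= L)%nat /\ forall y, X y -> agree L (snd p) y -> d (snd p) y < (/ 2) ^ S (fst p)).
  { intros [j w]. destruct (classic (X w)) as [Xw | nXw]; [| exists 0%nat; tauto].
    destruct (ball_contains_cylinder w ((/ 2) ^ S j) Xw) as [L HL]; [apply pow_lt; lra |].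
    exists (max j L). intros _. simpl. split; [lia |]. intros y Xy Hy.
    apply HL; [exact Xy | exact (agree_le L _ _ _ (Nat.le_max_r _ _) Hy)]. }
  destruct (choice _ Hreq) as [g Hg]. exists (fun j w => g (j, w)).
  intros z y Xz Hz. simpl in Hz.
  destruct (d_complete z Xz) as [x [Xx Hx]].
  { apply halving_cauchy; [exact Xz |]. intros j.
    apply (Hg (j, z j) (Xz j)); [exact (Xz (S j)) | apply Hz]. }
  replace y with x; [exact Xx |].
  apply (converges_unique z); [apply metric_limit_converges; assumption |].
  intros L. exists L. intros n Hn. destruct (Hg (n, z n) (Xz n)) as [Hge _]. simpl in Hge.
  apply (agree_le L (g (n, z n))); [lia | apply Hz].
Qed.

End CompleteMetric.

Lemma completely_metrizable_fusion (X : cset) : completely_metrizable X ->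
  exists req : nat -> Cantor -> nat, forall (z : nat -> Cantor) (y : Cantor),
    (forall j, X (z j)) ->
    (forall j, agree (req j (z j)) (z j) (z (S j)) /\ agree (req j (z j)) (z j) y) -> X y.
Proof.
  intros [d (_ & d_zero & d_sym & d_triangle & d_topology & d_complete)].
  exact (metric_fusion_closed X d d_zero d_sym d_triangle d_topology d_complete).
Qed.

Definition residue (r k : nat) : bool := k mod 3 =? r.

Lemma residue_spec r k : residue r k = true <-> k mod 3 = r.
Proof. apply Nat.eqb_eq. Qed.

Section Fusion.
Variables (b : Cantor) (r : nat) (req : nat -> Cantor -> nat).

(* The second component is a strict lower bound for the next reset position. *)
Fixpoint fusion (j : nat) : Cantor * nat :=
  match j with
  | 0 => (b, 0)
  | S j => let (z, a) := fusion j in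
           let e := 3 * (a + req j z) + r in (set_bit z e (negb (b e)), S e)
  end.

Definition stage (j : nat) : Cantor := fst (fusion j).
Definition pos (j : nat) : nat := 3 * (snd (fusion j) + req j (stage j)) + r.
Definition limit : Cantor := fun k => stage (S k) k.

Lemma fusion_S j : fusion (S j) = (set_bit (stage j) (pos j) (negb (b (pos j))), S (pos j)).
Proof. unfold pos, stage. simpl. destruct (fusion j). reflexivity. Qed.

Lemma stage_S j : stage (S j) = set_bit (stage j) (pos j) (negb (b (pos j))).
Proof. unfold stage at 1. rewrite fusion_S. reflexivity. Qed.

Lemma pos_lt_S j : pos j < pos (S j).
Proof. unfold pos at 2. rewrite fusion_S. simpl. lia. Qed.

Lemma pos_lt i j : i < j -> pos i < pos j.
Proof.
  intros Hij. induction Hij as [|j Hij IH]; [apply pos_lt_S |].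
  pose proof (pos_lt_S j). lia.
Qed.

Lemma pos_le i j : i <= j -> pos i <= pos j.
Proof.
  intros Hij. destruct (Nat.lt_eq_cases i j) as [[Hlt | ->] _]; [exact Hij | | lia].
  pose proof (pos_lt i j Hlt). lia.
Qed.

Lemma le_pos j : j <= pos j.
Proof. induction j as [|j IH]; [lia |]. pose proof (pos_lt_S j). lia. Qed.

Lemma req_le_pos j : req j (stage j) <= pos j.
Proof. unfold pos. lia. Qed.

Lemma residue_pos j : r < 3 -> residue r (pos j) = true.
Proof. intros Hr. apply residue_spec. exact (proj2 (div_mod3 _ r Hr)). Qed.

Lemma neq_pos k j : r < 3 -> residue r k = false \/ k < pos 0 -> k <> pos j.
Proof.
  intros Hr [Hk | Hk] ->; [rewrite residue_pos in Hk by exact Hr; discriminate |].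
  pose proof (pos_le 0 j (Nat.le_0_l j)). lia.
Qed.

Lemma stage_untouched j k : (forall i, i < j -> k <> pos i) -> stage j k = b k.
Proof.
  induction j as [|j IH]; intros Hk; [reflexivity |].
  rewrite stage_S. unfold set_bit. destruct (Nat.eqb_spec k (pos j)) as [E | _].
  - exfalso. exact (Hk j (Nat.lt_succ_diag_r j) E).
  - apply IH. intros i Hi. apply Hk. lia.
Qed.

Lemma stage_stable j j' k : j <= j' -> k < pos j -> stage j' k = stage j k.
Proof.
  intros Hj Hk. induction Hj as [|j' Hj IH]; [reflexivity |].
  rewrite stage_S. unfold set_bit. destruct (Nat.eqb_spec k (pos j')) as [-> | _]; [| exact IH].
  pose proof (pos_le j j' Hj). lia.
Qed.

Lemma agree_stage_S j : agree (pos j) (stage j) (stage (S j)).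
Proof. intros k Hk. symmetry. apply stage_stable; [lia | exact Hk]. Qed.

Lemma agree_stage_limit j : agree (pos j) (stage j) limit.
Proof.
  intros k Hk. unfold limit.
  rewrite <- (stage_stable j (max j (S k)) k) by lia.
  apply stage_stable; [lia |]. pose proof (le_pos (S k)). lia.
Qed.

Lemma limit_untouched k : (forall j, k <> pos j) -> limit k = b k.
Proof. intros Hk. apply stage_untouched. intros i _. apply Hk. Qed.

Lemma limit_pos j : limit (pos j) = negb (b (pos j)).
Proof.
  rewrite <- (agree_stage_limit (S j)) by apply pos_lt_S.
  rewrite stage_S. unfold set_bit. rewrite Nat.eqb_refl. reflexivity.
Qed.

Lemma stage_limit_off_positions j k :
  r < 3 -> residue r k = false \/ k < pos 0 -> stage j k = b k /\ limit k = b k.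
Proof.
  intros Hr Hk. split; [apply stage_untouched; intros i _ | apply limit_untouched; intros i];
    apply neq_pos; assumption.
Qed.

Lemma stage_eventually_eq j : eventually_eq (stage j) b.
Proof.
  exists (pos j). intros k Hk. apply stage_untouched. intros i Hi.
  pose proof (pos_lt i j Hi). lia.
Qed.

Lemma limit_flips_often :
  r < 3 -> infinitely_often (fun k => residue r k = true /\ limit k = negb (b k)).
Proof.
  intros Hr N. exists (pos N). split; [apply le_pos |].
  split; [apply residue_pos, Hr | apply limit_pos].
Qed.

End Fusion.

(** * The semifilter *)

Definition S_model : cset := fun x => inf_on (residue 0) x \/ cof_on (residue 1) x.

Lemma residue_3a a r : r < 3 -> residue r (3 * a + r) = true.
Proof. intros Hr. apply residue_spec, (div_mod3 a r Hr). Qed.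

Lemma S_model_eventually_eq x y : eventually_eq x y -> S_model x -> S_model y.
Proof.
  intros Hxy [Hx | Hx]; [left; exact (inf_on_eventually_eq _ _ _ Hxy Hx)
                       | right; exact (cof_on_eventually_eq _ _ _ Hxy Hx)].
Qed.

Lemma S_model_full : S_model (fun _ => true).
Proof.
  left. intros N. exists (3 * N + 0). split; [lia |]. rewrite residue_3a by lia. reflexivity.
Qed.

Lemma S_model_empty : ~ S_model (fun _ => false).
Proof.
  intros [Hx | [N HN]].
  - destruct (Hx 0) as [k [_ Hk]]. rewrite Bool.andb_false_r in Hk. discriminate.
  - discriminate (HN (3 * N + 1) ltac:(lia) (residue_3a N 1 ltac:(lia))).
Qed.

Lemma S_model_semifilter : semifilter S_model.
Proof.
  split; [exact S_model_empty | split; [exact S_model_full | split]].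
  - intros x y Hx Hxy. exact (S_model_eventually_eq x y Hxy Hx).
  - intros x y [Hx | Hx] Hxy; [left; exact (inf_on_mono _ _ _ Hxy Hx)
                              | right; exact (cof_on_mono _ _ _ Hxy Hx)].
Qed.

Definition graft (x : Cantor) (n : nat) (g : Cantor) : Cantor :=
  fun k => if k <? n then x k else g k.

Lemma agree_graft x n g : agree n x (graft x n g).
Proof. intros k Hk. unfold graft. destruct (Nat.ltb_spec k n); [reflexivity | lia]. Qed.

Lemma graft_beyond x n g k : n <= k -> graft x n g k = g k.
Proof. intros Hk. unfold graft. destruct (Nat.ltb_spec k n); [lia | reflexivity]. Qed.

Lemma graft_eventually_eq x n g : eventually_eq (graft x n g) g.
Proof. exists n. apply graft_beyond. Qed.

Lemma S_model_nowhere_sigma_compact : nowhere sigma_compact S_model.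
Proof.
  split; [exists (fun _ => true); exact S_model_full |].
  intros U [HUS HU] [x0 Ux0] Hsc. destruct (HU x0 Ux0) as [n Hn].
  destruct (sigma_compact_fusion U Hsc) as [req Hreq].
  set (b := graft x0 n (fun _ => false)).
  set (req' := fun j z => max n (req j z)).
  assert (Hpos : forall j, max n (req j (stage b 0 req' j)) <= pos b 0 req' j)
    by (intros j; apply (req_le_pos b 0 req')).
  apply (Hreq (stage b 0 req') (limit b 0 req')).
  - intros j Uz. apply S_model_empty.
    apply (S_model_eventually_eq b); [apply graft_eventually_eq |].
    apply (S_model_eventually_eq (stage b 0 req' j)); [apply stage_eventually_eq | auto].
  - intros j. apply (agree_le _ (pos b 0 req' j)); [specialize (Hpos j); lia |].
    apply agree_stage_limit.
  - apply Hn.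
    + left. intros N.
      destruct (limit_flips_often b 0 req' ltac:(lia) (max N n)) as [k [Hk [Hres Hflip]]].
      exists k. split; [lia |]. rewrite Hres, Hflip. unfold b. rewrite graft_beyond by lia.
      reflexivity.
    + apply (agree_trans n x0 b); [apply agree_graft |].
      apply (agree_le _ (pos b 0 req' 0)); [specialize (Hpos 0); lia |]. apply agree_stage_limit.
Qed.

Lemma residue_unique r r' k : residue r k = true -> r <> r' -> residue r' k = false.
Proof.
  intros Hr Hne. apply residue_spec in Hr. apply Nat.eqb_neq. lia.
Qed.

Lemma not_S_model x :
  eventually (fun k => residue 0 k = true -> x k = false) ->
  infinitely_often (fun k => residue 1 k = true /\ x k = false) -> ~ S_model x.
Proof.
  intros [N H0] H1 [Hinf | [M HM]].
  - destruct (Hinf N) as [k [Hk Hxk]]. apply Bool.andb_true_iff in Hxk as [Hr Hxk].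
    rewrite (H0 k Hk Hr) in Hxk. discriminate.
  - destruct (H1 M) as [k [Hk [Hr Hxk]]]. rewrite (HM k Hk Hr) in Hxk. discriminate.
Qed.

(* A point that is 0 on 3N, 1 on 3N+1, and differs from [f m] at [3 (n + m) + 2]. *)
Definition avoid_enum (f : nat -> Cantor) (n : nat) : Cantor :=
  fun k => if residue 0 k then false else if residue 1 k then true else negb (f (k / 3 - n) k).

Lemma avoid_enum_residue0 f n k : residue 0 k = true -> avoid_enum f n k = false.
Proof. intros Hk. unfold avoid_enum. rewrite Hk. reflexivity. Qed.

Lemma avoid_enum_residue1 f n k : residue 1 k = true -> avoid_enum f n k = true.
Proof.
  intros Hk. unfold avoid_enum. rewrite (residue_unique 1 0 k Hk), Hk by lia. reflexivity.
Qed.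

Lemma differs_from_enum (f : nat -> Cantor) n m x :
  (forall k, n <= k -> residue 1 k = false -> x k = avoid_enum f n k) -> f m <> x.
Proof.
  intros Hx Hm. set (k := 3 * (n + m) + 2).
  assert (Hk2 : residue 2 k = true) by (apply residue_3a; lia).
  apply (Bool.no_fixpoint_negb (x k)).
  rewrite Hx at 1 by (lia || exact (residue_unique 2 1 k Hk2 ltac:(lia))).
  unfold avoid_enum. rewrite (residue_unique 2 0 k Hk2), (residue_unique 2 1 k Hk2) by lia.
  replace (k / 3 - n) with m by (unfold k; rewrite (proj1 (div_mod3 (n + m) 2 ltac:(lia))); lia).
  rewrite Hm, Bool.negb_involutive. reflexivity.
Qed.

Lemma S_model_nowhere_complete_plus_countable :
  nowhere (union_of completely_metrizable countable) S_model.
Proof.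
  split; [exists (fun _ => true); exact S_model_full |].
  intros U [HUS HU] [x0 Ux0] [A [B [HA [[f Hf] HAB]]]]. destruct (HU x0 Ux0) as [n Hn].
  destruct (completely_metrizable_fusion A HA) as [req Hreq].
  set (b := graft x0 n (avoid_enum f n)).
  set (req' := fun j z => max n (req j z)).
  set (z := stage b 1 req'). set (y := limit b 1 req').
  assert (Hpos : forall j, max n (req j (z j)) <= pos b 1 req' j)
    by (intros j; apply (req_le_pos b 1 req')).
  assert (Hfixed : forall k j, residue 1 k = false \/ k < n -> z j k = b k /\ y k = b k).
  { intros k j Hk. apply stage_limit_off_positions; [lia |].
    specialize (Hpos 0). destruct Hk; [left; assumption | right; lia]. }
  assert (Hb : cof_on (residue 1) b).
  { apply (cof_on_eventually_eq _ (avoid_enum f n)).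
    { apply eventually_eq_sym, graft_eventually_eq. }
    exists 0. intros k _ Hk. apply avoid_enum_residue1, Hk. }
  assert (Az : forall j, A (z j)).
  { intros j. destruct (proj1 (HAB (z j))) as [Hz | Hz]; [| exact Hz |].
    - apply Hn.
      + right. apply (cof_on_eventually_eq _ b); [| exact Hb].
        apply eventually_eq_sym, stage_eventually_eq.
      + intros k Hk. rewrite (agree_graft x0 n (avoid_enum f n) k Hk). symmetry.
        apply (Hfixed k j). right; exact Hk.
    - exfalso. destruct (Hf _ Hz) as [m Hm]. apply (differs_from_enum f n m (z j) ); [| exact Hm].
      intros k Hk Hr. rewrite (proj1 (Hfixed k j (or_introl Hr))). apply graft_beyond, Hk. }
  assert (Ay : A y).
  { apply (Hreq z y Az). intros j. specialize (Hpos j).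
    split; apply (agree_le _ (pos b 1 req' j)); try lia;
      [apply agree_stage_S | apply agree_stage_limit]. }
  apply (not_S_model y); [| | exact (HUS y (proj2 (HAB y) (or_introl Ay)))].
  - exists n. intros k Hk H0.
    rewrite (proj2 (Hfixed k 0 (or_introl (residue_unique 0 1 k H0 ltac:(lia))))).
    unfold b. rewrite graft_beyond by exact Hk. apply avoid_enum_residue0, H0.
  - intros N. destruct (limit_flips_often b 1 req' ltac:(lia) (max N n)) as [k [Hk [H1 Hyk]]].
    exists k. split; [lia |]. split; [exact H1 |]. fold y in Hyk. rewrite Hyk. unfold b.
    rewrite graft_beyond by lia. rewrite avoid_enum_residue1 by exact H1. reflexivity.
Qed.

Theorem proposition5p3 : exists S : cset, semifilter S /\ is_S S.
Proof.
  exists S_model. split; [exact S_model_semifilter |].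
  split; [apply zero_dimensional_subspace |].
  split; [| split; [exact S_model_nowhere_sigma_compact
                  | exact S_model_nowhere_complete_plus_countable]].
  exists (inf_on (residue 0)), (cof_on (residue 1)).
  split; [apply inf_on_completely_metrizable |]. split; [apply cof_on_sigma_compact |].
  intros x. reflexivity.
Qed.
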